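(* Let $G$ be a finite abelian group, $\Phi$ a $3$-cocycle on $G$ with values in $\mathbbm{k}^*$, and $g_1,g_2,g_3\in G$. Then the following three identities are mutually equivalent: $\widetilde{\Phi}_{g_1}(g_2,g_3)=\widetilde{\Phi}_{g_1}(g_3,g_2)$; $\widetilde{\Phi}_{g_2}(g_1,g_3)=\widetilde{\Phi}_{g_2}(g_3,g_1)$; $\widetilde{\Phi}_{g_3}(g_1,g_2)=\widetilde{\Phi}_{g_3}(g_2,g_1)$.
   Context: For $g\in G$, $\widetilde{\Phi}_g(x,y)=\frac{\Phi(g,x,y)\Phi(x,y,g)}{\Phi(x,g,y)}$. *)

From mathcomp Require Import all_boot all_algebra all_fingroup.
Set Implicit Arguments. Unset Strict Implicit. Unset Printing Implicit Defensive.
Import GRing.Theory.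
Local Open Scope ring_scope.

Definition is_3cocycle (gT : finGroupType) (k : fieldType)
  (Phi : gT -> gT -> gT -> k) : Prop :=
  (forall a b c, Phi a b c != 0) /\
  (forall a b c d,
     Phi a b c * Phi a (b * c)%g d * Phi b c d
     = Phi (a * b)%g c d * Phi a b (c * d)%g).

Definition Phitilde (gT : finGroupType) (k : fieldType)
  (Phi : gT -> gT -> gT -> k) (g x y : gT) : k :=
  Phi g x y * Phi x y g / Phi x g y.

From mathcomp Require Import all_boot all_algebra all_fingroup.
From mathcomp Require Import ring.

Set Implicit Arguments.
Unset Strict Implicit.
Unset Printing Implicit Defensive.

Import GRing.Theory.
Local Open Scope ring_scope.

(* Clearing denominators, [Phitilde g x y = Phitilde g y x] says that the
   product of Phi over the three cyclic rotations of (g, x, y) equals the one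
   over the rotations of (g, y, x).  Both products are invariant under cyclic
   rotation, so each of the three identities compares the "cyclic" product of
   (g1, g2, g3) with the "anticyclic" one. *)

Section CyclicProduct.

Variables (T : Type) (R : comRingType) (Phi : T -> T -> T -> R).

Definition Phi_cycle (x y z : T) : R := Phi x y z * Phi y z x * Phi z x y.

Lemma Phi_cycle_rot (x y z : T) : Phi_cycle x y z = Phi_cycle y z x.
Proof. by rewrite /Phi_cycle; ring. Qed.

End CyclicProduct.

Lemma Phitilde_swap_eq (gT : finGroupType) (k : fieldType)
    (Phi : gT -> gT -> gT -> k) (Phi_neq0 : forall x y z, Phi x y z != 0)
    (g x y : gT) :
  Phitilde Phi g x y = Phitilde Phi g y x <->
  Phi_cycle Phi g x y = Phi_cycle Phi g y x.
Proof. by rewrite (rwP eqP) /Phitilde eqr_div // -(rwP eqP). Qed.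

Theorem lemma4p6 (gT : finGroupType) (k : fieldType)
  (Phi : gT -> gT -> gT -> k)
  (Habel : forall x y : gT, (x * y)%g = (y * x)%g)
  (Hcoc : is_3cocycle Phi) (g1 g2 g3 : gT) :
  (Phitilde Phi g1 g2 g3 = Phitilde Phi g1 g3 g2 <->
   Phitilde Phi g2 g1 g3 = Phitilde Phi g2 g3 g1) /\
  (Phitilde Phi g2 g1 g3 = Phitilde Phi g2 g3 g1 <->
   Phitilde Phi g3 g1 g2 = Phitilde Phi g3 g2 g1).
Proof.
have [Phi_neq0 _] := Hcoc.
rewrite !(Phitilde_swap_eq Phi_neq0) (Phi_cycle_rot Phi g2 g3 g1).
rewrite (Phi_cycle_rot Phi g3 g1 g2) (Phi_cycle_rot Phi g3 g2 g1).
rewrite (Phi_cycle_rot Phi g2 g1 g3).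
by split; split=> ->.
Qed.
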